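(* Let $\mathsf P'\subset\mathbb R^m$ be a $(\mu',\epsilon')$-net, $0<\Gamma_0\le1$, and $0\le\delta_0\le\frac14$. Suppose $\tau=q*\sigma\subseteq\mathsf P'$ is a $(k+1)$-simplex which is a forbidden configuration certified by $q$ and $B(C,R)$. Then for every $p\in\tau$ there is a ball $B(C_p,R_p)$ circumscribing $\tau_p$ such that $$R_p\le\Big(1+\frac{3\delta_0}{\mu'\Gamma_0^k}\Big)R\quad\text{and}\quad d(p,\partial B(C_p,R_p))\le\frac{6\delta_0}{\mu'^2\Gamma_0^k}\,\ell(\tau_p).$$
   Context: Let $d(x,X)$ denote Euclidean distance from a point to a set; $B(c,r)$ is the open ball. For a finite $\mathsf P\subset\mathbb R^m$ and $\epsilon>0$, $\mathsf P$ is $\epsilon$-dense if $d(x,\mathsf P\cup\partial\,\mathrm{conv}(\mathsf P))<\epsilon$ for every $x\in\mathrm{conv}(\mathsf P)$; it is $\mu\epsilon$-separated if $\|p-q\|\ge\mu\epsilon$ for all distinct $p,q\in\mathsf P$. For $0<\mu\le1$, $\mathsf P$ is a $(\mu,\epsilon)$-net if it is $\epsilon$-dense and $\mu\epsilon$-separated. A simplex is a nonempty finite subset $\sigma\subset\mathbb R^m$ (vertices need not be affinely independent); $\dim\sigma=|\sigma|-1$; faces are nonempty subsets. For $p\in\sigma$, $\sigma_p=\sigma\setminus\{p\}$; for $p\notin\sigma$, $p*\sigma=\sigma\cup\{p\}$. $L(\sigma)$, $\ell(\sigma)$ are the largest and smallest distances between distinct vertices. Altitude $D(p,\sigma)=d(p,\mathrm{aff}(\sigma_p))$.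 Thickness of a $j$-simplex: $\Upsilon(\sigma)=1$ if $j=0$, else $\min_{p}D(p,\sigma)/(jL(\sigma))$. $\sigma$ is $\Gamma_0$-good if every $j$-face $\sigma^j$ satisfies $\Upsilon(\sigma^j)\ge\Gamma_0^j$; $\Gamma_0$-bad otherwise; a $\Gamma_0$-flake is a $\Gamma_0$-bad simplex whose proper faces are all $\Gamma_0$-good. A circumscribing ball of $\sigma$ is an open ball whose boundary contains all vertices of $\sigma$. Forbidden configuration: given finite $\mathsf P'\subset\mathbb R^m$ and parameters $\mu',\epsilon'>0$, $0<\Gamma_0\le1$, $\delta_0\ge0$, a $(k+1)$-simplex $\tau\subseteq\mathsf P'$ with $k\le m$ is a forbidden configuration if it is a $\Gamma_0$-flake and there exist $p\in\tau$ and a circumscribing ball $B(C,R)$ of $\tau_p$ with $R<\epsilon'$ and $\big|\,\|p-C\|-R\,\big|\le\delta_0\mu'\epsilon'$; it is then said to be certified by $p$ and $B(C,R)$. *)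

From HB Require Import structures.
From mathcomp Require Import all_boot all_order all_algebra.
Set Implicit Arguments. Unset Strict Implicit. Unset Printing Implicit Defensive.
Import Order.TTheory GRing.Theory Num.Theory.
Local Open Scope ring_scope.

Section Defs.
Variables (R : rcfType) (m : nat).
Local Notation V := 'rV[R]_m.

Definition enorm (v : V) : R := Num.sqrt (\sum_(i < m) (v ord0 i) ^+ 2).
Definition edist (x y : V) : R := enorm (x - y).

Definition conv (s : seq V) (x : V) : Prop :=
  exists w : nat -> R, (forall i, (i < size s)%N -> 0 <= w i) /\
    \sum_(i < size s) w i = 1 /\ x = \sum_(i < size s) w i *: s`_i.
Definition aff (s : seq V) (x : V) : Prop :=
  exists w : nat -> R, \sum_(i < size s) w i = 1 /\ x = \sum_(i < size s) w i *: s`_i.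

Definition ball (c : V) (r : R) (y : V) : Prop := edist y c < r.
Definition closure (S : V -> Prop) (y : V) : Prop :=
  forall eta, 0 < eta -> exists z, S z /\ edist y z < eta.
Definition boundary (S : V -> Prop) (y : V) : Prop :=
  closure S y /\ closure (fun z => ~ S z) y.

(* d(x,S) < e, d(x,S) <= e, d(x,S) >= e  (d = infimum of distances) *)
Definition dist_lt (x : V) (S : V -> Prop) (e : R) : Prop :=
  exists y, S y /\ edist x y < e.
Definition dist_le (x : V) (S : V -> Prop) (e : R) : Prop :=
  forall eta, 0 < eta -> exists y, S y /\ edist x y < e + eta.
Definition dist_ge (x : V) (S : V -> Prop) (e : R) : Prop :=
  forall y, S y -> e <= edist x y.

Definition eps_dense (P : seq V) (eps : R) : Prop :=
  forall x, conv P x -> dist_lt x (fun y => y \in P \/ boundary (conv P) y) eps.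
Definition separated (P : seq V) (d : R) : Prop :=
  forall p q, p \in P -> q \in P -> p != q -> d <= edist p q.
Definition is_net (P : seq V) (mu eps : R) : Prop :=
  0 < mu /\ mu <= 1 /\ 0 < eps /\ eps_dense P eps /\ separated P (mu * eps).

(* simplices: duplicate-free lists of points; dim = size - 1; sigma_p = rem p sigma *)
Definition Lmax (s : seq V) : R :=
  \big[Num.max/0]_(p <- s) \big[Num.max/0]_(q <- s | q != p) edist p q.
Definition lmin (s : seq V) : R :=
  \big[Num.min/Lmax s]_(p <- s) \big[Num.min/Lmax s]_(q <- s | q != p) edist p q.

(* Upsilon(s) >= t : for j = 0, 1 >= t; for j >= 1,
   min_p D(p,s)/(j L(s)) >= t, i.e. every altitude D(p,s) = d(p, aff(s_p)) is >= t j L(s) *)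
Definition thick_ge (s : seq V) (t : R) : Prop :=
  let j := (size s).-1 in
  (j = 0%N -> t <= 1) /\
  ((0 < j)%N -> forall p, p \in s -> dist_ge p (aff (rem p s)) (t * j%:R * Lmax s)).

Definition is_face (f s : seq V) : Prop := uniq f /\ f != [::] /\ {subset f <= s}.

Definition good (G0 : R) (s : seq V) : Prop :=
  forall f, is_face f s -> thick_ge f (G0 ^+ (size f).-1).
Definition flake (G0 : R) (s : seq V) : Prop :=
  ~ good G0 s /\ forall f, is_face f s -> (size f < size s)%N -> good G0 f.

Definition circumscribes (c : V) (r : R) (s : seq V) : Prop :=
  forall v, v \in s -> boundary (ball c r) v.

End Defs.

From HB Require Import structures.
From mathcomp Require Import all_boot all_order all_algebra.
From mathcomp Require Import ring lra.
Import Order.TTheory GRing.Theory Num.Theory.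
Local Open Scope ring_scope.
Set Implicit Arguments. Unset Strict Implicit. Unset Printing Implicit Defensive.

(* For [p = q] the ball [B(C, Rad)] itself works.  For [p != q] we use the
   facet [tau_p = rem p tau], which is a proper face of the flake and hence
   good, so thick: the altitude [w] from [q] to the affine hull of the opposite
   face [rem q tau_p] (a face of [sigma]) has length at least [G0^k mu eps].
   Sliding the centre [C] along [w] gives a centre [Cp] equidistant from all of
   [tau_p], and the displacement [s = |C Cp|] obeys
   [s * 2|w| = | |qC|^2 - Rad^2 |], whence [s G0^k <= d0 (Rad + d0 mu eps / 2)].
   Since vertices of [sigma] move off the sphere by at most [s], both the radius
   bound and the bound on [d(p, dB(Cp, Rp))] follow by elementary estimates. *)

Section Euclid.
Variables (R : rcfType) (m : nat).
Local Notation V := 'rV[R]_m.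
Implicit Types (u v w x y z c : V) (s : seq V).

Definition dot u v : R := \sum_(i < m) u ord0 i * v ord0 i.
Definition nsq v : R := dot v v.

Lemma dotC u v : dot u v = dot v u.
Proof. by apply: eq_bigr => i _; rewrite mulrC. Qed.

Lemma dotDl u v w : dot (u + v) w = dot u w + dot v w.
Proof. by rewrite /dot -big_split; apply: eq_bigr => i _; rewrite !mxE mulrDl. Qed.

Lemma dotZl a u w : dot (a *: u) w = a * dot u w.
Proof. by rewrite /dot mulr_sumr; apply: eq_bigr => i _; rewrite !mxE mulrA. Qed.

Lemma dotBl u v w : dot (u - v) w = dot u w - dot v w.
Proof. by rewrite dotDl -scaleN1r dotZl mulN1r. Qed.

Lemma dotDr u v w : dot w (u + v) = dot w u + dot w v.
Proof. by rewrite dotC dotDl !(dotC w). Qed.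

Lemma dotZr a u w : dot w (a *: u) = a * dot w u.
Proof. by rewrite dotC dotZl dotC. Qed.

Lemma dotBr u v w : dot w (u - v) = dot w u - dot w v.
Proof. by rewrite dotC dotBl !(dotC w). Qed.

Lemma dot0r w : dot w 0 = 0.
Proof. by rewrite -(scale0r 0) dotZr mul0r. Qed.

Lemma dot_sumr w n (a : 'I_n -> R) (F : 'I_n -> V) :
  dot w (\sum_(i < n) a i *: F i) = \sum_(i < n) a i * dot w (F i).
Proof.
elim: n a F => [|n IH] a F; first by rewrite !big_ord0 dot0r.
by rewrite !big_ord_recr /= dotDr IH dotZr.
Qed.

Lemma nsq_ge0 v : 0 <= nsq v.
Proof. by apply: sumr_ge0 => i _; rewrite -expr2 sqr_ge0. Qed.

Lemma nsq_eq0 v : (nsq v == 0) = (v == 0).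
Proof.
apply/idP/eqP => [|->]; last by rewrite /nsq dot0r.
rewrite /nsq /dot psumr_eq0 => [/allP v0|i _]; last by rewrite -expr2 sqr_ge0.
apply/rowP => i; rewrite mxE.
by apply/eqP; rewrite -sqrf_eq0 expr2; have := v0 i (mem_index_enum i).
Qed.

Lemma nsqZ a v : nsq (a *: v) = a ^+ 2 * nsq v.
Proof. by rewrite /nsq dotZl dotZr mulrA expr2. Qed.

Lemma nsqD u v : nsq (u + v) = nsq u + 2 * dot u v + nsq v.
Proof. rewrite /nsq dotDl !dotDr (dotC v u); ring. Qed.

Lemma nsqB u v : nsq (u - v) = nsq u - 2 * dot u v + nsq v.
Proof. rewrite /nsq dotBl !dotBr (dotC v u); ring. Qed.

Lemma enormE v : enorm v = Num.sqrt (nsq v).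
Proof. by congr Num.sqrt; apply: eq_bigr => i _; rewrite expr2. Qed.

Lemma enorm_sq v : enorm v ^+ 2 = nsq v.
Proof. by rewrite enormE sqr_sqrtr ?nsq_ge0. Qed.

Lemma enorm_ge0 v : 0 <= enorm v.
Proof. exact: sqrtr_ge0. Qed.

Lemma enorm_eq0 v : (enorm v == 0) = (v == 0).
Proof. by rewrite -nsq_eq0 -enorm_sq sqrf_eq0. Qed.

Lemma enormZ a v : enorm (a *: v) = `|a| * enorm v.
Proof. by rewrite !enormE nsqZ sqrtrM ?sqr_ge0 // sqrtr_sqr. Qed.

Lemma CauchySchwarz_sq u v : dot u v ^+ 2 <= nsq u * nsq v.
Proof.
have [/eqP|v_neq0] := eqVneq (nsq v) 0.
  by rewrite nsq_eq0 => /eqP ->; rewrite /nsq !dot0r expr2 !mulr0.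
have v_gt0 : 0 < nsq v by rewrite lt_def v_neq0 nsq_ge0.
set t := dot u v / nsq v; have tE : t * nsq v = dot u v by rewrite mulfVK.
have := nsq_ge0 (u - t *: v); rewrite nsqB nsqZ dotZr => proj_ge0; rewrite -subr_ge0.
have -> : nsq u * nsq v - dot u v ^+ 2
        = (nsq u - 2 * (t * dot u v) + t ^+ 2 * nsq v) * nsq v by rewrite -tE; ring.
by rewrite mulr_ge0 // ltW.
Qed.

Lemma CauchySchwarz u v : dot u v <= enorm u * enorm v.
Proof.
apply: le_trans (ler_norm _) _; rewrite -[X in X <= _]sqrtr_sqr.
rewrite -(ger0_norm (mulr_ge0 (enorm_ge0 u) (enorm_ge0 v))) -sqrtr_sqr ler_sqrt ?sqr_ge0 //.
by rewrite exprMn !enorm_sq CauchySchwarz_sq.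
Qed.

Lemma enormD u v : enorm (u + v) <= enorm u + enorm v.
Proof.
rewrite -ler_sqr ?nnegrE ?addr_ge0 ?enorm_ge0 // sqrrD !enorm_sq nsqD.
have := CauchySchwarz u v; rewrite mulr2n; lra.
Qed.

Lemma edistC x y : edist x y = edist y x.
Proof. by rewrite /edist -opprB -scaleN1r enormZ normrN normr1 mul1r. Qed.

Lemma edist_ge0 x y : 0 <= edist x y.
Proof. exact: enorm_ge0. Qed.

Lemma edist_eq0 x y : (edist x y == 0) = (x == y).
Proof. by rewrite /edist enorm_eq0 subr_eq0. Qed.

Lemma edistxx x : edist x x = 0.
Proof. by apply/eqP; rewrite edist_eq0. Qed.

Lemma edist_triangle x y z : edist x z <= edist x y + edist y z.
Proof. by rewrite /edist; apply: le_trans (enormD _ _); rewrite addrA subrK. Qed.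

Lemma edist_center_shift x c c' : `|edist x c - edist x c'| <= edist c c'.
Proof.
rewrite ler_norml; have := edist_triangle x c c'; have := edist_triangle x c' c.
rewrite (edistC c' c); lra.
Qed.

Lemma boundary_ballP c r v : boundary (ball c r) v <-> 0 < r /\ edist v c = r.
Proof.
split=> [[in_cl out_cl] | [r_gt0 vc]].
  have [z [zc _]] := in_cl 1 ltr01.
  split; first exact: le_lt_trans (edist_ge0 _ _) zc.
  apply/eqP; rewrite eq_le; apply/andP; split; rewrite leNgt; apply/negP => lt_vc.
    have := in_cl (edist v c - r); rewrite subr_gt0 => /(_ lt_vc) [y [yc vy]].
    by have := edist_triangle v y c; rewrite /ball in yc; lra.
  have := out_cl (r - edist v c); rewrite subr_gt0 => /(_ lt_vc) [y [yc vy]].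
  by apply: yc; rewrite /ball; have := edist_triangle y v c; rewrite edistC in vy; lra.
split=> eta eta_gt0; last first.
  by exists v; split; [rewrite /ball vc ltxx | rewrite edistxx].
set t := eta / (eta + r).
have t_gt0 : 0 < t by rewrite divr_gt0 // addr_gt0.
have t_lt1 : t < 1 by rewrite /t ltr_pdivrMr ?addr_gt0 // mul1r ltrDl.
exists (v + t *: (c - v)); split.
  rewrite /ball /edist.
  have -> : v + t *: (c - v) - c = (1 - t) *: (v - c) by apply/rowP => i; rewrite !mxE; ring.
  rewrite enormZ ger0_norm ?subr_ge0 ?ltW // -/(edist v c) vc.
  by rewrite mulrBl mul1r gtrBl mulr_gt0.
rewrite /edist opprD addrA subrr add0r -scaleNr enormZ normrN gtr0_norm //.
rewrite -opprB -scaleN1r enormZ normrN normr1 mul1r -/(edist v c) vc /t.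
by rewrite mulrAC ltr_pdivrMr ?addr_gt0 // mulrDr ltrDr mulr_gt0.
Qed.

(* A point whose distance to the centre is within [e] of the radius is within
   [e] of the sphere; a point [y0] of the sphere handles the case [p = c]. *)
Lemma dist_le_sphere c r y0 p e : boundary (ball c r) y0 ->
  `|edist p c - r| <= e -> dist_le p (boundary (ball c r)) e.
Proof.
move=> /boundary_ballP [r_gt0 y0c].
have [->|p_neq_c] := eqVneq p c => gap eta eta_gt0.
  exists y0; split; first by apply/boundary_ballP; split.
  by move: gap; rewrite edistxx sub0r normrN gtr0_norm // edistC y0c; lra.
have d_gt0 : 0 < edist p c by rewrite lt_def edist_eq0 p_neq_c edist_ge0.
set d := edist p c in d_gt0 gap *.
exists (c + (r / d) *: (p - c)); split.
  apply/boundary_ballP; split => //.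
  by rewrite /edist addrAC subrr add0r enormZ -/d gtr0_norm ?divr_gt0 // divfK ?gt_eqF.
rewrite /edist.
have -> : p - (c + (r / d) *: (p - c)) = (1 - r / d) *: (p - c).
  by apply/rowP => i; rewrite !mxE; ring.
rewrite enormZ -/d -[d in _ * d]gtr0_norm // -normrM mulrBl mul1r divfK ?gt_eqF //.
by rewrite ltr_pwDr.
Qed.

Lemma Lmax_ge s a b : a \in s -> b \in s -> b != a -> edist a b <= Lmax s.
Proof.
by move=> a_in b_in b_neq_a; apply: (bigmax_sup_seq _ a) => //; apply: (bigmax_sup_seq _ b).
Qed.

Lemma lmin_ge s B : B <= Lmax s ->
  (forall a b, a \in s -> b \in s -> b != a -> B <= edist a b) -> B <= lmin s.
Proof.
move=> B_le pairs_ge; rewrite /lmin big_seq; apply: le_bigmin => // a a_in.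
by rewrite big_seq_cond; apply: le_bigmin => // b /andP [b_in b_neq_a]; apply: pairs_ge.
Qed.

Lemma separated_Lmax P s d : separated P d -> {subset s <= P} -> uniq s ->
  (1 < size s)%N -> d <= Lmax s.
Proof.
case: s => [|a [|b s]] // sepP sP /= /andP [a_notin _] _.
have b_neq_a : b != a by apply: contraNneq a_notin => <-; rewrite mem_head.
apply: le_trans (Lmax_ge (mem_head _ _) _ b_neq_a); last by rewrite !inE eqxx orbT.
by apply: sepP; rewrite ?sP ?inE ?eqxx ?orbT // eq_sym.
Qed.

Lemma separated_lmin P s d : separated P d -> {subset s <= P} -> uniq s ->
  (1 < size s)%N -> d <= lmin s.
Proof.
move=> sepP sP s_uniq s_size; apply: lmin_ge; first exact: separated_Lmax sepP sP s_uniq s_size.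
by move=> a b a_in b_in b_neq_a; apply: sepP; rewrite ?sP // eq_sym.
Qed.

Lemma dot_comb_perp s (f : V -> V) y (a : nat -> R) :
  (forall v, v \in s -> dot y (f v) = 0) ->
  dot y (\sum_(i < size s) a i *: f s`_i) = 0.
Proof.
move=> perp; rewrite (dot_sumr y (fun i => a i) (fun i => f s`_i)).
by apply: big1 => i _; rewrite perp ?mulr0 // mem_nth.
Qed.

Lemma aff_perp s v0 w y : (forall v, v \in s -> dot w (v - v0) = 0) ->
  aff s y -> dot w (y - v0) = 0.
Proof.
move=> perp [a [a_sum1 ->]].
have -> : \sum_(i < size s) a i *: s`_i - v0 = \sum_(i < size s) a i *: (s`_i - v0).
  rewrite -[v0 in LHS]scale1r -a_sum1 scaler_suml -sumrB.
  by apply: eq_bigr => i _; rewrite scalerBr.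
exact: (dot_comb_perp (f := fun v => v - v0)).
Qed.

(* Orthogonal projection onto a finite span: [x] minus a suitable combination of
   the vectors [f v] is orthogonal to all of them (Gram--Schmidt, by induction). *)
Lemma span_perp s (f : V -> V) x : exists a : nat -> R,
  forall v, v \in s -> dot (x - \sum_(i < size s) a i *: f s`_i) (f v) = 0.
Proof.
elim: s x => [|u s IH] x; first by exists (fun _ => 0).
have [a1 perp1] := IH x; have [a2 perp2] := IH (f u).
set y := \sum_(i < size s) a1 i *: f s`_i in perp1.
set z := \sum_(i < size s) a2 i *: f s`_i in perp2.
set d := f u - z; set lam := dot (x - y) d / nsq d.
exists (fun i => if i is j.+1 then a1 j - lam * a2 j else lam) => v.
have -> : x - \sum_(i < size (u :: s))
            (fun i => if i is j.+1 then a1 j - lam * a2 j else lam) i *: f (u :: s)`_i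
          = (x - y) - lam *: d.
  rewrite big_ord_recl /=.
  have -> : \sum_(i < size s) (a1 i - lam * a2 i) *: f s`_i = y - lam *: z.
    rewrite /y /z scaler_sumr -sumrB; apply: eq_bigr => i _.
    by rewrite scalerBl scalerA.
  by rewrite /d scalerBr; apply/rowP => i; rewrite !mxE; ring.
have perp_s : forall v, v \in s -> dot (x - y - lam *: d) (f v) = 0.
  by move=> e e_in; rewrite dotBl dotZl perp1 // perp2 // mulr0 subrr.
rewrite in_cons => /orP [/eqP ->|]; last exact: perp_s.
have -> : f u = d + z by rewrite subrK.
rewrite dotDr (dot_comb_perp _ perp_s) addr0 dotBl dotZl.
have [/eqP|d_neq0] := eqVneq (nsq d) 0.
  by rewrite nsq_eq0 => /eqP ->; rewrite dot0r /lam /nsq dot0r mulr0 subrr.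
by rewrite /lam mulfVK // subrr.
Qed.

Lemma aff_head_comb v0 (rest : seq V) (a : nat -> R) :
  aff (v0 :: rest) (v0 + \sum_(i < size rest) a i *: (rest`_i - v0)).
Proof.
exists (fun i => if i is j.+1 then a j else 1 - \sum_(j < size rest) a j); split.
  by rewrite big_ord_recl /= subrK.
rewrite big_ord_recl scalerBl scale1r.
have -> : \sum_(i < size rest) a i *: (rest`_i - v0)
        = \sum_(i < size rest) a i *: rest`_i - (\sum_(i < size rest) a i) *: v0.
  by rewrite scaler_suml -sumrB; apply: eq_bigr => i _; rewrite scalerBr.
by rewrite addrCA addrC.
Qed.

Lemma altitude_foot v0 (rest : seq V) q : exists w,
  aff (v0 :: rest) (q - w) /\ forall v, v \in v0 :: rest -> dot w (v - v0) = 0.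
Proof.
have [a perp] := span_perp rest (fun v => v - v0) (q - v0).
set S := \sum_(i < size rest) a i *: (rest`_i - v0) in perp *.
exists (q - v0 - S); split.
  have -> : q - (q - v0 - S) = v0 + S by apply/rowP => i; rewrite !mxE; ring.
  exact: aff_head_comb.
by move=> v; rewrite in_cons => /orP [/eqP ->|]; [rewrite subrr dot0r | exact: perp].
Qed.

(* Moving the centre along [w] yields a centre [Cp] equidistant from [q] and
   all of [s]; the displacement satisfies
   [|C Cp| * 2|w| = | |qC|^2 - Rad^2 |]. *)
Lemma recenter s v0 C q w Rad : w != 0 ->
  (forall v, v \in s -> edist v C = Rad) ->
  (forall v, v \in s -> dot w (v - v0) = 0) -> dot w (q - v0) = nsq w ->
  exists Cp, (forall v, v \in s -> edist v Cp = edist q Cp) /\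
             edist Cp C * (2 * enorm w) = `|edist q C ^+ 2 - Rad ^+ 2|.
Proof.
move=> w_neq0 on_sphere perp q_alt.
have w_gt0 : 0 < nsq w by rewrite lt_def nsq_eq0 w_neq0 nsq_ge0.
set t := (nsq (q - C) - Rad ^+ 2) / (2 * nsq w).
have tE : nsq (q - C) = Rad ^+ 2 + t * (2 * nsq w).
  by rewrite /t mulfVK ?mulf_neq0 ?gt_eqF // addrCA subrr addr0.
clearbody t.
have shiftE x : nsq (x - (C + t *: w)) = nsq (x - C) - 2 * t * dot w (x - C) + t ^+ 2 * nsq w.
  by rewrite opprD addrA [in LHS]nsqB dotZr nsqZ dotC mulrA.
have splitC x : dot w (x - C) = dot w (x - v0) + dot w (v0 - C).
  by rewrite -dotDr addrA subrK.
exists (C + t *: w); split.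
  move=> v v_in; have vC : nsq (v - C) = Rad ^+ 2.
    by rewrite -enorm_sq; have := on_sphere v v_in; rewrite /edist => ->.
  rewrite /edist !enormE !shiftE (splitC v) (splitC q) perp // q_alt tE vC.
  by congr Num.sqrt; ring.
rewrite /edist addrAC subrr add0r enormZ enorm_sq tE addrAC subrr add0r.
rewrite normrM (gtr0_norm (mulr_gt0 _ w_gt0)) // -enorm_sq; ring.
Qed.

End Euclid.

Lemma rem_rem_subset (T : eqType) (s : seq T) p q : uniq s ->
  {subset rem q (rem p s) <= rem q s}.
Proof.
move=> s_uniq v; rewrite (mem_rem_uniq _ (rem_uniq _ s_uniq)) inE => /andP [v_neq_q v_in].
exact: rem_mem v_neq_q (mem_rem v_in).
Qed.

Section Simplices.
Variables (R : rcfType) (m : nat).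
Local Notation V := 'rV[R]_m.
Implicit Types (s : seq V).

Lemma aff_singleton (b y : V) : aff [:: b] y -> y = b.
Proof. by case=> a [/=]; rewrite !big_ord1 /= => -> ->; rewrite scale1r. Qed.

Lemma Lmax_ge0 s : 0 <= Lmax s.
Proof. exact: bigmax_ge_id. Qed.

Lemma Lmax_pair (a b : V) : Lmax [:: a; b] <= edist a b.
Proof.
rewrite /Lmax big_seq; apply: bigmax_le => [|x x_in]; first exact: edist_ge0.
rewrite big_seq_cond; apply: bigmax_le => [|y /andP [y_in y_neq_x]]; first exact: edist_ge0.
move: x_in y_in y_neq_x; rewrite !inE.
by case/orP=> /eqP -> /orP [] /eqP ->; rewrite ?eqxx // edistC.
Qed.

Lemma Lmax_le_sphere s C r : 0 <= r -> (forall v, v \in s -> edist v C = r) ->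
  Lmax s <= 2 * r.
Proof.
move=> r_ge0 on_sphere; rewrite /Lmax big_seq.
apply: bigmax_le => [|a a_in]; first by rewrite mulr_ge0.
rewrite big_seq_cond; apply: bigmax_le => [|b /andP [b_in _]]; first by rewrite mulr_ge0.
apply: le_trans (edist_triangle a C b) _.
by rewrite (edistC C b) !on_sphere //; lra.
Qed.

Lemma edge_good G0 s : 0 < G0 -> G0 <= 1 -> size s = 2%N -> good G0 s.
Proof.
move=> G0_gt0 G0_le1 s_size f [f_uniq [f_nil f_sub]].
have := uniq_leq_size f_uniq f_sub; rewrite s_size.
case: f f_uniq f_nil {f_sub} => [|a [|b [|c f]]] //= /andP [a_notin _] _ _.
have a_neq_b : a != b by move: a_notin; rewrite inE.
have edge_ge : G0 ^+ 1 * 1 * Lmax [:: a; b] <= edist a b.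
  by rewrite expr1 mulr1 (le_trans _ (Lmax_pair a b)) // ler_piMl ?Lmax_ge0.
split=> // _ p; rewrite !inE => /orP [] /eqP -> /= y.
  by rewrite eqxx => /aff_singleton ->.
by rewrite (negPf a_neq_b) eqxx => /aff_singleton ->; rewrite edistC.
Qed.

Lemma flake_facet_good G0 s p : flake G0 s -> uniq s -> p \in s ->
  (1 < size s)%N -> good G0 (rem p s).
Proof.
move=> [_ proper_good] s_uniq p_in s_size.
have rem_size : size (rem p s) = (size s).-1 by rewrite size_rem.
apply: proper_good; last by rewrite rem_size prednK // ltnW.
split; first exact: rem_uniq.
split; last by move=> v /mem_rem.
by rewrite -size_eq0 rem_size -subn1 subn_eq0 -ltnNge.
Qed.

Lemma good_thick G0 s : good G0 s -> uniq s -> s != [::] -> thick_ge s (G0 ^+ (size s).-1).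
Proof. by move=> s_good s_uniq s_nil; apply: s_good; split; last split. Qed.

Lemma thick_altitude s t q y : thick_ge s t -> (1 < size s)%N -> q \in s ->
  aff (rem q s) y -> t * (size s).-1%:R * Lmax s <= edist q y.
Proof.
by move=> [_ altitude_ge] s_size q_in; apply: altitude_ge => //; rewrite -ltnS prednK // ltnW.
Qed.

End Simplices.

Section Estimates.
Variable R : realFieldType.

Lemma sqr_gap_le (a b e : R) : 0 <= a -> 0 <= b -> `|a - b| <= e ->
  `|a ^+ 2 - b ^+ 2| <= e * (2 * b + e).
Proof.
move=> a_ge0 b_ge0 ab_le; rewrite subr_sqr normrM (ger0_norm (addr_ge0 a_ge0 b_ge0)).
apply: ler_pM => //; first by rewrite addr_ge0.
by move: ab_le; rewrite ler_norml; lra.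
Qed.

(* Bound on the centre displacement [s] produced by recentring, scaled by the
   thickness factor [g]: [s * 2N] is the squared-distance gap of the certifying
   vertex, and [N >= g mu eps] is the altitude. *)
Lemma shift_scaled_le (mu eps g d0 Rad dq s N : R) : 0 < mu * eps -> 0 <= s ->
  0 <= dq -> 0 <= Rad -> g * (mu * eps) <= N -> `|dq - Rad| <= d0 * mu * eps ->
  s * (2 * N) = `|dq ^+ 2 - Rad ^+ 2| -> s * g <= d0 * (Rad + d0 * mu * eps / 2).
Proof.
move=> h_gt0 s_ge0 dq_ge0 Rad_ge0 N_ge gap shiftE.
have := sqr_gap_le dq_ge0 Rad_ge0 gap; rewrite -shiftE => sN_le.
have sgh_le : s * (2 * (g * (mu * eps))) <= s * (2 * N) by rewrite ler_wpM2l // ler_wpM2l.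
rewrite -(ler_pM2r h_gt0); have := le_trans sgh_le sN_le; nra.
Qed.

Lemma shift_radius_bound (mu eps g d0 Rad s : R) : 0 < mu -> mu <= 1 -> 0 < g ->
  0 <= d0 -> d0 <= 1 / 4 -> 0 <= Rad -> mu * eps <= 2 * Rad -> 0 <= s ->
  s * g <= d0 * (Rad + d0 * mu * eps / 2) -> Rad + s <= (1 + 3 * d0 / (mu * g)) * Rad.
Proof.
move=> mu_gt0 mu_le1 g_gt0 d0_ge0 d0_le Rad_ge0 Rad_ge s_ge0 sg_le.
have d0R_ge0 : 0 <= d0 * Rad := mulr_ge0 d0_ge0 Rad_ge0.
have d0d0_le : d0 * (d0 * (mu * eps)) <= d0 * (d0 * (2 * Rad)).
  by apply: ler_wpM2l => //; apply: ler_wpM2l.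
have d0d0R_le : d0 * (d0 * Rad) <= 1 / 4 * (d0 * Rad) := ler_wpM2r d0R_ge0 d0_le.
have sg_le' : s * g <= 5 / 4 * (d0 * Rad) by nra.
rewrite mulrDl mul1r lerD2l mulrAC ler_pdivlMr ?mulr_gt0 //.
have : s * g * mu <= s * g by rewrite ler_piMr // mulr_ge0 // ltW.
nra.
Qed.

Lemma shift_gap_bound (mu eps g d0 Rad s L : R) : 0 < mu -> mu <= 1 -> 0 < g ->
  0 <= d0 -> d0 <= 1 / 4 -> 0 <= Rad -> Rad < eps -> mu * eps <= L ->
  s * g <= d0 * (Rad + d0 * mu * eps / 2) -> s + s <= 6 * d0 / (mu ^+ 2 * g) * L.
Proof.
move=> mu_gt0 mu_le1 g_gt0 d0_ge0 d0_le Rad_ge0 Rad_lt L_ge sg_le.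
have eps_gt0 : 0 < eps by lra.
have d0eps_ge0 : 0 <= d0 * eps := mulr_ge0 d0_ge0 (ltW eps_gt0).
have d0R_le : d0 * Rad <= d0 * eps by apply: ler_wpM2l => //; apply: ltW.
have d0mue_le : d0 * mu * eps <= d0 * eps by rewrite mulrAC ler_piMr.
have d0mue_ge0 : 0 <= d0 * mu * eps by rewrite mulrAC mulr_ge0 // ltW.
have d0d0_le : d0 * (d0 * mu * eps) <= 1 / 4 * (d0 * mu * eps) := ler_wpM2r d0mue_ge0 d0_le.
have sg_le' : s * g <= 9 / 8 * (d0 * eps) by nra.
rewrite mulrAC ler_pdivlMr ?mulr_gt0 ?exprn_gt0 //.
have : mu ^+ 2 * (s * g) <= mu * (9 / 8 * (d0 * eps)) by nra.
nra.
Qed.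

Lemma certificate_gap_bound (mu eps g d0 L : R) : 0 < mu -> mu <= 1 -> 0 < eps ->
  0 < g -> g <= 1 -> 0 <= d0 -> mu * eps <= L ->
  d0 * mu * eps <= 6 * d0 / (mu ^+ 2 * g) * L.
Proof.
move=> mu_gt0 mu_le1 eps_gt0 g_gt0 g_le1 d0_ge0 L_ge.
rewrite [X in _ <= X]mulrAC ler_pdivlMr ?mulr_gt0 ?exprn_gt0 //.
have mu2g_le1 : mu ^+ 2 * g <= 1.
  by apply: mulr_ile1; rewrite ?exprn_ge0 ?exprn_ile1 // ltW.
have d0mue_le : d0 * mu * eps <= d0 * L by rewrite -mulrA ler_wpM2l.
have d0mue_ge0 : 0 <= d0 * mu * eps by rewrite !mulr_ge0 // ltW.
have : d0 * mu * eps * (mu ^+ 2 * g) <= d0 * mu * eps := ler_piMr d0mue_ge0 mu2g_le1.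
lra.
Qed.

End Estimates.

Section ForbiddenConfiguration.
Variables (R : rcfType) (m : nat).
Local Notation V := 'rV[R]_m.
Variables (P : seq V) (mu eps G0 d0 Rad : R) (k : nat) (tau : seq V) (q C : V).
Hypotheses (P_sep : separated P (mu * eps)) (mu_gt0 : 0 < mu) (mu_le1 : mu <= 1)
  (eps_gt0 : 0 < eps) (G0_gt0 : 0 < G0) (G0_le1 : G0 <= 1)
  (d0_ge0 : 0 <= d0) (d0_le : d0 <= 1 / 4).
Hypotheses (tau_uniq : uniq tau) (tau_sub : {subset tau <= P})
  (tau_size : size tau = (k + 2)%N) (tau_flake : flake G0 tau) (q_in : q \in tau).
Hypotheses (sigma_circ : circumscribes C Rad (rem q tau)) (Rad_lt : Rad < eps)
  (q_gap : `|edist q C - Rad| <= d0 * mu * eps).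

(* Edges are good, so the flake [tau] has dimension [k + 1 >= 2]. *)
Lemma flake_dim_gt0 : (0 < k)%N.
Proof.
rewrite lt0n; apply/negP => /eqP k0; case: tau_flake => tau_bad _.
by apply: tau_bad; apply: edge_good; rewrite ?tau_size ?k0.
Qed.

Lemma facet_size p : p \in tau -> size (rem p tau) = k.+1.
Proof. by move=> p_in; rewrite size_rem // tau_size addn2. Qed.

Lemma sigma_sphere v : v \in rem q tau -> edist v C = Rad.
Proof. by move=> /sigma_circ /boundary_ballP []. Qed.

Lemma sigma_vertex : exists v, boundary (ball C Rad) v.
Proof.
have := facet_size q_in; case: (rem q tau) sigma_circ => // v s circ _.
by exists v; apply: circ; rewrite mem_head.
Qed.

Lemma Rad_gt0 : 0 < Rad.
Proof. by have [v /boundary_ballP []] := sigma_vertex. Qed.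

Lemma facet_separated p : p \in tau -> mu * eps <= lmin (rem p tau).
Proof.
move=> p_in; apply: (separated_lmin P_sep); first by move=> v /mem_rem /tau_sub.
  exact: rem_uniq.
by rewrite facet_size // ltnS flake_dim_gt0.
Qed.

(* Two separated vertices of [sigma] force the circumradius to be at least [mu eps / 2]. *)
Lemma Rad_ge : mu * eps <= 2 * Rad.
Proof.
apply: le_trans (Lmax_le_sphere (ltW Rad_gt0) sigma_sphere).
apply: (separated_Lmax P_sep); first by move=> v /mem_rem /tau_sub.
  exact: rem_uniq.
by rewrite facet_size // ltnS flake_dim_gt0.
Qed.

(* The altitude from [q] in the good facet [tau_p = rem p tau] (for [p != q]):
   its foot is orthogonal to the opposite face [rem q tau_p], and thickness of
   [tau_p] forces it to be long. *)
Lemma facet_altitude p : p \in tau -> p != q -> exists v0 w,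
  [/\ v0 \in rem q (rem p tau), (forall v, v \in rem q (rem p tau) -> dot w (v - v0) = 0),
      dot w (q - v0) = nsq w & G0 ^+ k * (mu * eps) <= enorm w].
Proof.
move=> p_in p_neq_q; set tp := rem p tau.
have tp_uniq : uniq tp := rem_uniq p tau_uniq.
have tp_size : size tp = k.+1 := facet_size p_in.
have tp_2 : (1 < size tp)%N by rewrite tp_size ltnS flake_dim_gt0.
have q_in_tp : q \in tp by rewrite rem_mem // eq_sym.
have tp_thick : thick_ge tp (G0 ^+ k).
  rewrite -[k]/(k.+1.-1) -tp_size; apply: good_thick => //.
    by apply: flake_facet_good tau_flake tau_uniq p_in _; rewrite tau_size addn2.
  by rewrite -size_eq0 tp_size.
have : size (rem q tp) = k by rewrite size_rem // tp_size.
case E: (rem q tp) => [|v0 rest] /= size_opp; first by move: flake_dim_gt0; rewrite -size_opp.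
have [w [foot perp]] := altitude_foot v0 rest q.
exists v0, w; split => //; first exact: mem_head.
  apply/eqP; rewrite -subr_eq0 /nsq -dotBr addrAC; apply/eqP; exact: aff_perp perp foot.
have := thick_altitude tp_thick tp_2 q_in_tp; rewrite E => /(_ _ foot).
rewrite tp_size /edist subKr; apply: le_trans; rewrite -mulrA.
apply: ler_wpM2l; first by rewrite exprn_ge0 // ltW.
have mue_le : mu * eps <= Lmax tp.
  by apply: (separated_Lmax P_sep) => // v /mem_rem /tau_sub.
by rewrite /= (le_trans mue_le) // ler_peMl ?Lmax_ge0 // ler1n flake_dim_gt0.
Qed.

Lemma sigma_shift Cp v : v \in rem q tau -> `|edist v Cp - Rad| <= edist Cp C.
Proof.
by move=> v_in; rewrite -(sigma_sphere v_in) distrC (edistC Cp); apply: edist_center_shift.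
Qed.

Lemma facet_recentred_ball p : p \in tau -> p != q -> exists Cp,
  [/\ circumscribes Cp (edist q Cp) (rem p tau),
      `|edist q Cp - Rad| <= edist Cp C
    & edist Cp C * G0 ^+ k <= d0 * (Rad + d0 * mu * eps / 2)].
Proof.
move=> p_in p_neq_q.
have [v0 [w [v0_in perp q_alt w_ge]]] := facet_altitude p_in p_neq_q.
have w_gt0 : 0 < enorm w.
  by apply: lt_le_trans w_ge; rewrite !mulr_gt0 // exprn_gt0.
have w_neq0 : w != 0 by rewrite -enorm_eq0 gt_eqF.
have opp_sub : {subset rem q (rem p tau) <= rem q tau} := rem_rem_subset tau_uniq.
have opp_sphere v : v \in rem q (rem p tau) -> edist v C = Rad.
  by move=> /opp_sub; apply: sigma_sphere.
have [Cp [equidist shiftE]] := recenter w_neq0 opp_sphere perp q_alt.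
have v0_neq_q : v0 != q by move: v0_in; rewrite mem_rem_uniq ?rem_uniq // inE => /andP [].
have qCp_gt0 : 0 < edist q Cp.
  rewrite lt_def edist_ge0 andbT; apply: contraNneq v0_neq_q => /eqP qCp0.
  have /eqP := equidist v0 v0_in; rewrite (eqP qCp0) edist_eq0 => /eqP ->.
  by rewrite eq_sym -edist_eq0.
exists Cp; split.
- move=> v v_in; apply/boundary_ballP; split => //.
  have [-> //|v_neq_q] := eqVneq v q.
  by apply: equidist; rewrite rem_mem.
- by rewrite -(equidist v0 v0_in) sigma_shift ?opp_sub.
- apply: (shift_scaled_le _ (edist_ge0 _ _) (edist_ge0 _ _) (ltW Rad_gt0) w_ge q_gap shiftE).
  exact: mulr_gt0.
Qed.

Lemma thickness_factor_gt0 : 0 < G0 ^+ k.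
Proof. exact: exprn_gt0. Qed.

Lemma certificate_vertex_ball : exists Cp Rp,
    circumscribes Cp Rp (rem q tau) /\ Rp <= (1 + 3 * d0 / (mu * G0 ^+ k)) * Rad /\
    dist_le q (boundary (ball Cp Rp)) (6 * d0 / (mu ^+ 2 * G0 ^+ k) * lmin (rem q tau)).
Proof.
have [y0 y0_bd] := sigma_vertex.
exists C, Rad; split => //; split.
  by rewrite ler_peMl ?(ltW Rad_gt0) // lerDl divr_ge0 ?mulr_ge0 // ltW // thickness_factor_gt0.
apply: (dist_le_sphere y0_bd); apply: le_trans q_gap _.
apply: certificate_gap_bound thickness_factor_gt0 _ d0_ge0 (facet_separated q_in) => //.
by rewrite exprn_ile1 // ltW.
Qed.

Lemma other_vertex_ball p : p \in tau -> p != q -> exists Cp Rp,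
    circumscribes Cp Rp (rem p tau) /\ Rp <= (1 + 3 * d0 / (mu * G0 ^+ k)) * Rad /\
    dist_le p (boundary (ball Cp Rp)) (6 * d0 / (mu ^+ 2 * G0 ^+ k) * lmin (rem p tau)).
Proof.
move=> p_in p_neq_q; have [Cp [circ q_shift s_le]] := facet_recentred_ball p_in p_neq_q.
have p_shift := sigma_shift Cp (rem_mem p_neq_q p_in).
have Rad_ge0 := ltW Rad_gt0.
exists Cp, (edist q Cp); split => //; split.
  apply: le_trans (shift_radius_bound mu_gt0 mu_le1 thickness_factor_gt0 d0_ge0 d0_le
                     Rad_ge0 Rad_ge (edist_ge0 _ _) s_le).
  by move: q_shift; rewrite ler_norml; lra.
have q_in_tp : q \in rem p tau by rewrite rem_mem // eq_sym.
apply: (dist_le_sphere (circ q q_in_tp)).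
apply: le_trans (shift_gap_bound mu_gt0 mu_le1 thickness_factor_gt0 d0_ge0 d0_le
                   Rad_ge0 Rad_lt (facet_separated p_in) s_le).
by move: q_shift p_shift; rewrite !ler_norml; lra.
Qed.

End ForbiddenConfiguration.

Theorem mainTheorem7 (R : rcfType) (m : nat) (P' : seq 'rV[R]_m)
  (mu' eps' G0 d0 : R) (k : nat) (tau : seq 'rV[R]_m) (q C : 'rV[R]_m) (Rad : R) :
  is_net P' mu' eps' ->
  0 < G0 -> G0 <= 1 -> 0 <= d0 -> d0 <= 1 / 4 ->
  (* tau = q * sigma is a (k+1)-simplex in P', forbidden configuration certified by q, B(C,Rad) *)
  uniq tau -> {subset tau <= P'} -> size tau = (k + 2)%N -> (k <= m)%N ->
  flake G0 tau -> q \in tau ->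
  circumscribes C Rad (rem q tau) -> Rad < eps' ->
  `| edist q C - Rad | <= d0 * mu' * eps' ->
  forall p, p \in tau ->
    exists (Cp : 'rV[R]_m) (Rp : R),
      circumscribes Cp Rp (rem p tau) /\
      Rp <= (1 + 3 * d0 / (mu' * G0 ^+ k)) * Rad /\
      dist_le p (boundary (ball Cp Rp)) (6 * d0 / (mu' ^+ 2 * G0 ^+ k) * lmin (rem p tau)).
Proof.
move=> [mu_gt0 [mu_le1 [eps_gt0 [_ P_sep]]]] G0_gt0 G0_le1 d0_ge0 d0_le tau_uniq tau_sub
  tau_size _ tau_flake q_in sigma_circ Rad_lt q_gap p p_in.
have [->|p_neq_q] := eqVneq p q.
  by apply: (certificate_vertex_ball (C := C) P_sep).
by apply: (other_vertex_ball (q := q) (C := C) P_sep).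
Qed.
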